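(* Let $C\subseteq\mathbb{S}$ be an s-convex set. Then: (i) there is $u_0\in\mathbb{R}^n$ with $\|u_0\|=1$ such that $C\subseteq\{x\in\mathbb{R}^n\mid\langle x,u_0\rangle\ge0\}\cap\mathbb{S}$; (ii) if moreover $C$ is closed, there are $u_0\in\mathbb{R}^n$ with $\|u_0\|=1$ and $\alpha>0$ such that $C\subseteq\{x\in\mathbb{R}^n\mid\langle x,u_0\rangle\ge\alpha\}\cap\mathbb{S}$; in particular $C\subseteq\{x\in\mathbb{S}\mid \langle x,u_0\rangle>0\}$.
   Context: Standing setting: $n\ge 2$; $\mathbb{R}^n$ carries the usual inner product $\langle\cdot,\cdot\rangle$ and Euclidean norm $\|\cdot\|$; $o$ denotes the zero vector. $\Phi:\mathbb{R}^n\to\mathbb{R}_+:=[0,\infty)$ is a continuous function with $\Phi(tx)=t\Phi(x)$ for all $x\in\mathbb{R}^n$, $t\ge 0$, and $\Phi(x)=0$ iff $x=o$. Set $\mathbb{S}:=\{x\in\mathbb{R}^n\mid \Phi(x)=1\}$ (with the topology induced from $\mathbb{R}^n$), and $\rho:\mathbb{R}^n\to\{o\}\cup\mathbb{S}$, $\rho(x):=x/\Phi(x)$ for $x\neq o$, $\rho(o):=o$. For $x,y\in\mathbb{S}$, $\lambda\in[0,1]$, $\lambda x+_s(1-\lambda)y:=\rho(\lambda x+(1-\lambda)y)$. A nonempty set $S\subseteq\mathbb{S}$ is called s-convex if $\lambda x+_s(1-\lambda)y\in S$ for all $x,y\in S$ and $\lambda\in[0,1]$. *)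

(* R^n is 'rV[R]_n over R : realType. *)
From HB Require Import structures.
From mathcomp Require Import all_boot all_order all_algebra.
From mathcomp Require Import all_classical all_reals all_analysis.
Set Implicit Arguments. Unset Strict Implicit. Unset Printing Implicit Defensive.
Import Order.TTheory GRing.Theory Num.Theory.
Import numFieldNormedType.Exports.
Local Open Scope classical_set_scope.
Local Open Scope ring_scope.

Section Defs.
Variables (R : realType) (n : nat).

Definition dotv (x y : 'rV[R]_n) : R := \sum_(i < n) x ord0 i * y ord0 i.

Definition enorm (x : 'rV[R]_n) : R := Num.sqrt (dotv x x).

Definition gauge_like (Phi : 'rV[R]_n -> R) : Prop :=
  [/\ continuous Phi,
      (forall x, 0 <= Phi x),
      (forall x (t : R), 0 <= t -> Phi (t *: x) = t * Phi x)
    & (forall x, Phi x = 0 <-> x = 0)].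

Definition Ssph (Phi : 'rV[R]_n -> R) : set 'rV[R]_n := [set x | Phi x = 1].

Definition rho (Phi : 'rV[R]_n -> R) (x : 'rV[R]_n) : 'rV[R]_n :=
  if x == 0 then 0 else (Phi x)^-1 *: x.

Definition scomb (Phi : 'rV[R]_n -> R) (l : R) (x y : 'rV[R]_n) : 'rV[R]_n :=
  rho Phi (l *: x + (1 - l) *: y).

Definition s_convex (Phi : 'rV[R]_n -> R) (C : set 'rV[R]_n) : Prop :=
  [/\ C !=set0, C `<=` Ssph Phi &
      forall x y l, C x -> C y -> 0 <= l <= 1 -> C (scomb Phi l x y)].

Definition closed_in_S (Phi : 'rV[R]_n -> R) (C : set 'rV[R]_n) : Prop :=
  exists F : set 'rV[R]_n, closed F /\ C = F `&` Ssph Phi.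

End Defs.

From HB Require Import structures.
From mathcomp Require Import all_boot all_order all_algebra.
From mathcomp Require Import all_classical all_reals all_analysis.
From mathcomp Require Import finmap ring lra.
Import Order.TTheory GRing.Theory Num.Theory.
Import numFieldNormedType.Exports.
Local Open Scope classical_set_scope.
Local Open Scope ring_scope.

(* Let K be the cone {t c | t > 0, c in C} spanned by an s-convex set C.
   Since t1 c1 + t2 c2 is a positive multiple of an s-combination of c1 and
   c2, the cone K is closed under addition and avoids 0; hence every convex
   combination of finitely many points of C is nonzero.

   (i)  For finitely many points of C, the point of least norm p of their
        convex hull satisfies <c, p> >= <p, p> > 0 on them.  The half-spaces
        {u | <c, u> >= 0} (c in C) therefore have the finite intersection
        property on the compact unit sphere, which yields a unit vector u
        with <c, u> >= 0 on C.  The argument is carried out inside the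
        orthogonal complement of a finite family of vectors.
   (ii) If C is compact, the slice C & u^perp is again s-convex, compact and
        lives in a smaller orthogonal complement; by induction on the
        codimension it is strictly separated by some v0, and u + e v0 for a
        small e > 0 separates C strictly.  The minimum of <c, u + e v0> over
        the compact set C gives the margin alpha.
   A closed subset of the Phi-sphere is compact because that sphere is
   bounded, which is how the main theorem reduces to (ii). *)

Section InnerProduct.
Context {R : realType} {n : nat}.
Local Notation V := 'rV[R]_n.
Local Notation dot := (@dotv R n).

Lemma dotvC (x y : V) : dot x y = dot y x.
Proof. by apply: eq_bigr => i _; rewrite mulrC. Qed.

Lemma dotvDl (x y z : V) : dot (x + y) z = dot x z + dot y z.
Proof. by rewrite /dotv -big_split; apply: eq_bigr => i _; rewrite mxE mulrDl. Qed.

Lemma dotvBl (x y z : V) : dot (x - y) z = dot x z - dot y z.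
Proof. by rewrite /dotv -sumrB; apply: eq_bigr => i _; rewrite !mxE mulrBl. Qed.

Lemma dotvZl a (x z : V) : dot (a *: x) z = a * dot x z.
Proof. by rewrite /dotv mulr_sumr; apply: eq_bigr => i _; rewrite mxE mulrA. Qed.

Lemma dotv0l (z : V) : dot 0 z = 0.
Proof. by rewrite -(scale0r 0) dotvZl mul0r. Qed.

Lemma dotvDr (x y z : V) : dot z (x + y) = dot z x + dot z y.
Proof. by rewrite !(dotvC z) dotvDl. Qed.

Lemma dotvBr (x y z : V) : dot z (x - y) = dot z x - dot z y.
Proof. by rewrite !(dotvC z) dotvBl. Qed.

Lemma dotvZr a (x z : V) : dot z (a *: x) = a * dot z x.
Proof. by rewrite !(dotvC z) dotvZl. Qed.

Lemma dotv0r (z : V) : dot z 0 = 0.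
Proof. by rewrite dotvC dotv0l. Qed.

Lemma dotv_suml I (r : seq I) (P : pred I) (F : I -> V) z :
  dot (\sum_(i <- r | P i) F i) z = \sum_(i <- r | P i) dot (F i) z.
Proof. by apply: (big_morph (dot^~ z)); [move=> x y; exact: dotvDl | exact: dotv0l]. Qed.

Lemma dotv_expand (x y : V) t :
  dot (x + t *: y) (x + t *: y) = dot x x + 2 * t * dot x y + t ^+ 2 * dot y y.
Proof. by rewrite !dotvDl !dotvDr !dotvZl !dotvZr (dotvC y x); ring. Qed.

Lemma coord_sq_le (x : V) i : x ord0 i ^+ 2 <= dot x x.
Proof.
rewrite /dotv (bigD1 i) //= expr2 lerDl.
by apply: sumr_ge0 => j _; rewrite -expr2 sqr_ge0.
Qed.

Lemma dotv_ge0 (x : V) : 0 <= dot x x.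
Proof. by apply: sumr_ge0 => i _; rewrite -expr2 sqr_ge0. Qed.

Lemma dotv_gt0 {x : V} : x != 0 -> 0 < dot x x.
Proof.
move=> x0; rewrite lt_def dotv_ge0 andbT; apply: contra x0 => /eqP xx0.
apply/eqP/rowP => i; rewrite mxE; apply/eqP.
by rewrite -sqrf_eq0 eq_le sqr_ge0 andbT -xx0 coord_sq_le.
Qed.

Lemma normalize {x : V} : x != 0 -> exists2 t, 0 < t & dot (t *: x) (t *: x) = 1.
Proof.
move=> x0; have xx0 := dotv_gt0 x0.
exists (Num.sqrt (dot x x))^-1; first by rewrite invr_gt0 sqrtr_gt0.
rewrite dotvZl dotvZr mulrA -expr2 exprVn sqr_sqrtr ?mulVf ?gt_eqF //.
exact: ltW.
Qed.

Lemma enorm_unit (u : V) : dot u u = 1 -> enorm u = 1.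
Proof. by move=> uu; rewrite /enorm uu sqrtr1. Qed.

Definition perp (s : seq V) : set V :=
  [set x | forall w, w \in s -> dot x w = 0].

Lemma perp_nil (x : V) : perp [::] x.
Proof. by []. Qed.

Lemma perpZ (s : seq V) t x : perp s x -> perp s (t *: x).
Proof. by move=> xs w ws; rewrite dotvZl xs // mulr0. Qed.

End InnerProduct.

Section Topology.
Context {R : realType} {n : nat}.
Local Notation V := 'rV[R]_n.
Local Notation dot := (@dotv R n).

Lemma continuous_sum {T : topologicalType} {W : normedModType R} I (r : seq I)
    (F : I -> T -> W) :
  (forall i, continuous (F i)) -> continuous (fun x => \sum_(i <- r) F i x).
Proof. by move=> hF; apply: continuous_big => //; exact: add_continuous. Qed.

Lemma continuous_dotl (y : V) : continuous (fun x : V => dot x y).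
Proof.
apply: (@continuous_sum _ _ _ _ (fun i (x : V) => x ord0 i * y ord0 i)) => i x.
by apply: continuousM; [exact: coord_continuous | exact: cst_continuous].
Qed.

Lemma continuous_dotvv : continuous (fun x : V => dot x x).
Proof.
apply: (@continuous_sum _ _ _ _ (fun i (x : V) => x ord0 i * x ord0 i)) => i x.
by apply: continuousM; exact: coord_continuous.
Qed.

Lemma closed_level {T : topologicalType} (f : T -> R) a :
  continuous f -> closed [set x | f x = a].
Proof. by rewrite continuous_closedP => /(_ _ (@closed_eq _ a)). Qed.

Lemma closed_sublevel {T : topologicalType} (f : T -> R) a :
  continuous f -> closed [set x | f x <= a].
Proof. by rewrite continuous_closedP => /(_ _ (@closed_le _ a)). Qed.

Lemma closed_superlevel {T : topologicalType} (f : T -> R) a :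
  continuous f -> closed [set x | a <= f x].
Proof. by rewrite continuous_closedP => /(_ _ (@closed_ge _ a)). Qed.

Lemma perp_closed (s : seq V) : closed (perp s).
Proof.
have -> : perp s = \bigcap_(w in [set w | w \in s]) [set x | dot x w = 0].
  by apply/seteqP; split => x /= xs w ws; apply: xs.
by apply: closed_bigI => w _; exact/closed_level/continuous_dotl.
Qed.

Lemma compact_dot_bounded (A : set V) (M : R) :
  closed A -> (forall x, A x -> dot x x <= M) -> compact A.
Proof.
move=> cA hM.
have cB : compact [set v : V | forall i, `[- (M + 1), M + 1]%classic (v ord0 i)].
  by apply: (@rV_compact _ _ (fun=> `[- (M + 1), M + 1]%classic)) => i; exact: segment_compact.
apply: (subclosed_compact cA cB) => x /hM xM i /=; rewrite in_itv /=.
have := coord_sq_le x i; have := dotv_ge0 x.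
by move=> x0 xi; apply/andP; split; nra.
Qed.

Lemma compact_attains_min {A : set V} {f : V -> R} :
  compact A -> continuous f -> A !=set0 ->
  exists2 a0, A a0 & forall a, A a -> f a0 <= f a.
Proof.
move=> cA cf A0; have [a0 Aa0 a0min] := EVT_min_rV A0 cA (continuous_subspaceT cf).
by exists a0 => [|a Aa]; [rewrite -in_setE | apply: a0min; rewrite in_setE].
Qed.

Lemma compact_lower_bound {A : set V} {f : V -> R} :
  compact A -> continuous f -> exists2 M, 0 <= M & forall a, A a -> - M <= f a.
Proof.
move=> cA cf; have [A0|A0] := pselect (A !=set0); last first.
  by exists 0 => // a Aa; exfalso; apply: A0; exists a.
have [a0 Aa0 a0min] := compact_attains_min cA cf A0.
exists `|f a0| => // a Aa; apply: le_trans (a0min a Aa).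
by rewrite lerNl -normrN ler_norm.
Qed.

Lemma compact_pos_lower_bound {A : set V} {f : V -> R} :
  compact A -> continuous f -> (forall a, A a -> 0 < f a) ->
  exists2 g, 0 < g & forall a, A a -> g <= f a.
Proof.
move=> cA cf fpos; have [A0|A0] := pselect (A !=set0); last first.
  by exists 1 => // a Aa; exfalso; apply: A0; exists a.
have [a0 Aa0 a0min] := compact_attains_min cA cf A0.
by exists (f a0); [exact: fpos | exact: a0min].
Qed.

End Topology.

Section MinimalNorm.
Context {R : realType} {n : nat}.
Local Notation V := 'rV[R]_n.
Local Notation dot := (@dotv R n).

Lemma slope_ge0 {a b : R} : 0 <= b ->
  (forall t, 0 < t <= 1 -> 0 <= 2 * t * a + t ^+ 2 * b) -> 0 <= a.
Proof.
move=> b0 h; rewrite leNgt; apply/negP => a0.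
have ba : 0 < b - a by lra.
pose t := - a / (b - a).
have t0 : 0 < t by rewrite divr_gt0 // oppr_gt0.
have t1 : t <= 1 by rewrite ler_pdivrMr // mul1r; lra.
have htb : t * b = t * a - a.
  have e : t * (b - a) = - a by rewrite /t mulfVK // gt_eqF.
  by rewrite -e mulrBr addrC subrK.
have := h t; rewrite t0 t1 => /(_ isT).
have -> : 2 * t * a + t ^+ 2 * b = t * (a * (1 + t)).
  by rewrite expr2 -[t * t * b]mulrA htb; ring.
rewrite pmulr_rge0 // pmulr_lge0; lra.
Qed.

Lemma min_norm_dot (p q : V) :
  (forall t, 0 < t <= 1 -> dot p p <= dot (p + t *: (q - p)) (p + t *: (q - p))) ->
  dot p p <= dot q p.
Proof.
move=> pmin; suff : 0 <= dot p (q - p) by rewrite dotvBr (dotvC p q) subr_ge0.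
apply: (slope_ge0 (dotv_ge0 (q - p))) => t /pmin.
by rewrite dotv_expand -addrA lerDl.
Qed.

Definition simplex m : set 'rV[R]_m :=
  [set l | (forall i, 0 <= l ord0 i) /\ \sum_i l ord0 i = 1].

Definition convex_comb {m} (F : 'I_m -> V) (l : 'rV[R]_m) : V :=
  \sum_i l ord0 i *: F i.

Lemma simplex_delta m (j : 'I_m) : simplex m (delta_mx ord0 j).
Proof.
split=> [i|]; first by rewrite mxE ler0n.
rewrite (bigD1 j) //= big1 ?addr0; first by rewrite mxE !eqxx.
by move=> i /negbTE ij; rewrite mxE ij andbF.
Qed.

Lemma simplex_convex {m} {l l' : 'rV[R]_m} {t} : simplex m l -> simplex m l' ->
  0 <= t <= 1 -> simplex m ((1 - t) *: l + t *: l').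
Proof.
move=> [l0 l1] [l'0 l'1] /andP[t0 t1]; split=> [i|].
  by rewrite !mxE addr_ge0 // mulr_ge0 // subr_ge0.
under eq_bigr do rewrite !mxE.
by rewrite big_split /= -!mulr_sumr l1 l'1 !mulr1 subrK.
Qed.

Lemma simplex_pos_weight {m} {l : 'rV[R]_m} : simplex m l -> exists j, 0 < l ord0 j.
Proof.
move=> [l0 l1]; apply: contrapT => none.
have : \sum_i l ord0 i = 0.
  rewrite big1 // => i _; apply/eqP; rewrite eq_le l0 andbT leNgt.
  by apply/negP => li; apply: none; exists i.
by rewrite l1 => /eqP; rewrite oner_eq0.
Qed.

Lemma convex_comb_lin m (F : 'I_m -> V) (a b : R) (l l' : 'rV[R]_m) :
  convex_comb F (a *: l + b *: l') = a *: convex_comb F l + b *: convex_comb F l'.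
Proof.
rewrite /convex_comb !scaler_sumr -big_split; apply: eq_bigr => i _.
by rewrite !mxE scalerDl !scalerA.
Qed.

Lemma convex_comb_delta m (F : 'I_m -> V) j : convex_comb F (delta_mx ord0 j) = F j.
Proof.
rewrite /convex_comb (bigD1 j) //= big1 ?addr0; first by rewrite mxE !eqxx scale1r.
by move=> i /negbTE ij; rewrite mxE ij andbF scale0r.
Qed.

Lemma continuous_convex_comb m (F : 'I_m -> V) : continuous (convex_comb F).
Proof.
apply: (@continuous_sum _ _ _ _ _ (fun i (l : 'rV[R]_m) => l ord0 i *: F i)).
by move=> i l; apply: continuousZr_tmp; exact: coord_continuous.
Qed.

Lemma simplex_compact m : compact (simplex m).
Proof.
have cB : compact [set l : 'rV[R]_m | forall i, `[0 : R, 1]%classic (l ord0 i)].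
  by apply: (@rV_compact _ _ (fun=> `[0 : R, 1]%classic)) => i; exact: segment_compact.
apply: (subclosed_compact _ cB); last first.
  move=> l [l0 l1] i; rewrite /= in_itv /= l0 /= -l1 (bigD1 i) //= lerDl.
  exact: sumr_ge0.
have -> : simplex m = \bigcap_(i in [set: 'I_m]) [set l | 0 <= l ord0 i]
    `&` [set l | \sum_i l ord0 i = 1].
  by apply/seteqP; split => l /= [l0 l1]; split => // i *; exact: l0.
apply: closedI; first by apply: closed_bigI => i _; exact/closed_superlevel/coord_continuous.
apply: closed_level.
by apply: (@continuous_sum _ _ _ _ _ (fun i (l : 'rV[R]_m) => l ord0 i)) => i; exact: coord_continuous.
Qed.

End MinimalNorm.

Section Gauge.
Context {R : realType} {n : nat}.
Local Notation V := 'rV[R]_n.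
Local Notation dot := (@dotv R n).
Context {Phi : V -> R}.
Hypothesis hPhi : gauge_like Phi.

Lemma gauge0 : Phi 0 = 0.
Proof. by case: hPhi => _ _ _ h; apply/h. Qed.

Lemma gauge_gt0 x : x != 0 -> 0 < Phi x.
Proof.
case: hPhi => _ Phi_ge0 _ Phi_eq0 x0; rewrite lt_def Phi_ge0 andbT.
by apply: contra x0 => /eqP /Phi_eq0 ->.
Qed.

Lemma sphere_neq0 {x} : Ssph Phi x -> x != 0.
Proof. by apply: contraPN => /eqP ->; rewrite /Ssph /= gauge0 => /eqP; rewrite eq_sym oner_eq0. Qed.

(* The Phi-sphere is bounded: Phi has a positive minimum g on the Euclidean
   unit sphere, so Phi x = 1 forces |x| <= 1 / g. *)
Lemma sphere_bounded : exists M, forall x, Ssph Phi x -> dot x x <= M.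
Proof.
pose E := [set x : V | dot x x = 1].
have cE : compact E.
  by apply: (@compact_dot_bounded _ _ _ 1) => [|x ->//]; exact/closed_level/continuous_dotvv.
have [g g0 Eg] : exists2 g, 0 < g & forall x, E x -> g <= Phi x.
  apply: compact_pos_lower_bound cE _ _; first by case: hPhi.
  move=> x xx1; apply: gauge_gt0 => //; apply: contra_eq_neq xx1 => ->.
  by rewrite dotv0l eq_sym oner_neq0.
exists (g ^- 2) => x Sx; have [t t0 tx] := normalize (sphere_neq0 Sx).
have gt : g <= t.
  have Phitx : Phi (t *: x) = t.
    by case: hPhi => _ _ PhiZ _; rewrite PhiZ ?ltW // (Sx : Phi x = 1) mulr1.
  by rewrite -Phitx; apply: Eg.
move: tx; rewrite dotvZl dotvZr mulrA -expr2 => tx.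
have g2t2 : g ^+ 2 <= t ^+ 2 by rewrite lerXn2r // nnegrE ltW // (lt_le_trans g0).
rewrite -div1r ler_pdivlMr ?exprn_gt0 //; have := dotv_ge0 x; nra.
Qed.

Lemma closed_in_S_compact {C : set V} : closed_in_S Phi C -> compact C.
Proof.
case=> F [cF ->]; have [M SM] := sphere_bounded.
apply: (@compact_dot_bounded _ _ _ M) => [|x [_ /SM] //].
by apply: (closedI cF); apply: closed_level; case: hPhi.
Qed.

End Gauge.

Section SConvexCone.
Context {R : realType} {n : nat}.
Local Notation V := 'rV[R]_n.
Local Notation dot := (@dotv R n).
Context {Phi : V -> R} {C : set V}.
Hypothesis hPhi : gauge_like Phi.
Hypothesis hC : s_convex Phi C.

Lemma s_convex_neq0 x : C x -> x != 0.
Proof. by case: hC => _ CS _ /CS; exact: sphere_neq0. Qed.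

Lemma convex_pair_neq0 x y l : C x -> C y -> 0 <= l <= 1 ->
  l *: x + (1 - l) *: y != 0.
Proof.
move=> Cx Cy l01; apply/negP => /eqP xy0.
case: hC => _ _ /(_ x y l Cx Cy l01); rewrite /scomb /rho xy0 eqxx.
by move/s_convex_neq0; rewrite eqxx.
Qed.

Definition cone (v : V) := exists t c, [/\ 0 < t, C c & v = t *: c].

Lemma cone_C {c} : C c -> cone c.
Proof. by exists 1, c; rewrite scale1r. Qed.

Lemma cone_neq0 v : cone v -> v != 0.
Proof.
case=> t [c [t0 Cc ->]]; rewrite scaler_eq0 negb_or gt_eqF //=.
exact: s_convex_neq0.
Qed.

Lemma cone_scale {t v} : 0 < t -> cone v -> cone (t *: v).
Proof.
move=> t0 [s [c [s0 Cc ->]]]; exists (t * s), c.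
by rewrite scalerA mulr_gt0.
Qed.

(* t1 c1 + t2 c2 is a positive multiple of the s-combination with weight
   t1 / (t1 + t2). *)
Lemma cone_add v w : cone v -> cone w -> cone (v + w).
Proof.
move=> [t1 [c1 [t10 C1 ->]]] [t2 [c2 [t20 C2 ->]]].
set s := t1 + t2; have s0 : 0 < s by rewrite addr_gt0.
set l := t1 / s.
have l01 : 0 <= l <= 1.
  apply/andP; split; first by rewrite divr_ge0 // ltW.
  by rewrite ler_pdivrMr // mul1r lerDl ltW.
set m := l *: c1 + (1 - l) *: c2.
have m0 : m != 0 by exact: convex_pair_neq0.
have -> : t1 *: c1 + t2 *: c2 = (s * Phi m) *: scomb Phi l c1 c2.
  rewrite /scomb /rho -/m (negbTE m0) scalerA -mulrA mulfV ?gt_eqF ?gauge_gt0 //.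
  rewrite mulr1 /m scalerDr !scalerA /l mulrCA mulfV ?gt_eqF // mulr1.
  congr (_ + _ *: _).
  by rewrite mulrBr mulr1 mulrCA mulfV ?gt_eqF // mulr1 /s addrC addKr.
apply: cone_scale; first by rewrite mulr_gt0 ?gauge_gt0.
by apply: cone_C; case: hC => _ _; apply.
Qed.

Lemma cone_convex_comb m (F : 'I_m -> V) (l : 'rV[R]_m) :
  (forall i, C (F i)) -> simplex m l -> cone (convex_comb F l).
Proof.
move=> CF ls; have [j lj] := simplex_pos_weight ls; case: ls => l0 _.
pose cone0 v := v = 0 \/ cone v.
have rest : cone0 (\sum_(i | i != j) l ord0 i *: F i).
  apply: (big_ind cone0); first by left.
    move=> v w [->|cv] [->|cw]; rewrite ?addr0 ?add0r; [by left|by right..|].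
    by right; exact: cone_add.
  move=> i _; have [->|li] := eqVneq (l ord0 i) 0; first by left; rewrite scale0r.
  by right; apply: cone_scale (cone_C (CF i)); rewrite lt_def li l0.
have cj := cone_scale lj (cone_C (CF j)).
rewrite /convex_comb (bigD1 j) //=.
by case: rest => [->|crest]; [rewrite addr0 | exact: cone_add].
Qed.

(* Finitely many points of C inside perp s are strictly separated by a
   nonzero vector of perp s: the least-norm point of their convex hull. *)
Lemma finite_separation {s D : seq V} : D != [::] ->
  (forall d, d \in D -> C d) -> (forall d, d \in D -> perp s d) ->
  exists p, [/\ p != 0, perp s p & forall d, d \in D -> 0 < dot d p].
Proof.
case: D => [//|d0 D'] _; set D := d0 :: D' => DC Ds.
pose F (i : 'I_(size D)) := nth 0 D i.
have FD i : F i \in D by rewrite mem_nth.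
pose A := [set convex_comb F l | l in simplex (size D)].
have cA : compact A.
  apply: continuous_compact; last exact: simplex_compact.
  exact/continuous_subspaceT/continuous_convex_comb.
have A0 : A !=set0 by exists (convex_comb F (delta_mx ord0 ord0)), (delta_mx ord0 ord0);
  first exact: simplex_delta.
have [_ [l ls <-] pmin] := compact_attains_min cA continuous_dotvv A0.
pose p := convex_comb F l.
have p0 : p != 0 by apply/cone_neq0/cone_convex_comb => // i; apply: DC.
exists p; split => // [w ws|d dD].
  rewrite dotv_suml big1 // => i _.
  by rewrite dotvZl Ds // mulr0.
have di : (index d D < size D)%N by rewrite index_mem.
have -> : d = F (Ordinal di) by rewrite /F /= nth_index.
apply: lt_le_trans (dotv_gt0 p0) _; apply: min_norm_dot => t /andP[t0 t1].
apply: pmin; exists ((1 - t) *: l + t *: delta_mx ord0 (Ordinal di)).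
  by apply: simplex_convex ls (simplex_delta _ _) _; rewrite ltW.
rewrite convex_comb_lin convex_comb_delta scalerBr scalerBl scale1r.
by rewrite addrA addrAC.
Qed.

Lemma weak_separation {s : seq V} : (forall c, C c -> perp s c) ->
  exists u, [/\ perp s u, dot u u = 1 & forall c, C c -> 0 <= dot c u].
Proof.
move=> Cs; pose U := perp s `&` [set u : V | dot u u = 1].
have cU : compact U.
  apply: (@compact_dot_bounded _ _ _ 1) => [|x [_ ->] //].
  by apply: closedI; [exact: perp_closed | exact/closed_level/continuous_dotvv].
move: cU; rewrite compact_In0 => /(_ V C (fun c => U `&` [set u | 0 <= dot u c])).
case.
- exists (fun c => [set u | 0 <= dot u c]) => // c _.
  exact/closed_superlevel/continuous_dotl.
- move=> D DC; have [Dnil|D0] := eqVneq (enum_fset D) [::].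
    by exists 0 => c cD; move: (cD : c \in enum_fset D); rewrite Dnil.
  have DC' d : d \in enum_fset D -> C d by move=> dD; rewrite -in_setE; exact: DC.
  have [p [p0 ps ppos]] := finite_separation D0 DC' (fun d dD => Cs d (DC' d dD)).
  have [t t0 tp] := normalize p0.
  exists (t *: p) => c cD; split; first by split; [exact: perpZ | exact: tp].
  by rewrite /= dotvZl dotvC ltW // mulr_gt0 // ppos.
- move=> u Uu; case: hC => -[c0 Cc0] _ _; have [[us uu] _] := Uu c0 Cc0.
  by exists u; split => // c /Uu [_]; rewrite /= dotvC.
Qed.

End SConvexCone.

Section OrthogonalSystem.
Context {R : realType} {n : nat}.
Local Notation V := 'rV[R]_n.
Local Notation dot := (@dotv R n).

Fixpoint orthogonal_system (s : seq V) : Prop :=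
  if s is u :: s' then [/\ u != 0, perp s' u & orthogonal_system s'] else True.

Lemma orthogonal_system_neq0 s i : orthogonal_system s ->
  (i < size s)%N -> nth 0 s i != 0.
Proof. by elim: s i => [//|u s IH] [|i] /= [u0 us os] //; exact: IH. Qed.

Lemma orthogonal_system_perp s i j : orthogonal_system s ->
  (i < size s)%N -> (j < size s)%N -> i != j -> dot (nth 0 s i) (nth 0 s j) = 0.
Proof.
elim: s i j => [//|u s IH] [|i] [|j] /= [u0 us os] //= hi hj ij.
- by apply: us; exact: mem_nth.
- by rewrite dotvC; apply: us; exact: mem_nth.
- exact: IH.
Qed.

(* An orthogonal system has at most n vectors: its Gram matrix is an
   invertible diagonal matrix of rank size s. *)
Lemma orthogonal_system_size s : orthogonal_system s -> (size s <= n)%N.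
Proof.
move=> os; pose A : 'M[R]_(size s, n) := \matrix_(i, j) nth 0 s i ord0 j.
pose d : 'rV[R]_(size s) := \row_i dot (nth 0 s i) (nth 0 s i).
have gram : A *m A^T = diag_mx d.
  apply/matrixP => i j; rewrite !mxE.
  have -> : \sum_k A i k * A^T k j = dot (nth 0 s i) (nth 0 s j).
    by apply: eq_bigr => k _; rewrite !mxE.
  have [->|ij] := eqVneq i j; first by rewrite mulr1n.
  by rewrite mulr0n orthogonal_system_perp.
have unit_gram : A *m A^T \in unitmx.
  rewrite unitmxE gram det_diag unitfE; apply/prodf_neq0 => i _.
  by rewrite mxE gt_eqF // dotv_gt0 // orthogonal_system_neq0.
have := mxrankM_maxl A A^T; rewrite (mxrank_unit unit_gram) => /leq_trans.
by apply; exact: rank_leq_col.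
Qed.

End OrthogonalSystem.

Section StrictSeparation.
Context {R : realType} {n : nat}.
Local Notation V := 'rV[R]_n.
Local Notation dot := (@dotv R n).
Context {Phi : V -> R}.
Hypothesis hPhi : gauge_like Phi.

Lemma tilt_separation {C : set V} {u v0} : compact C ->
  (forall c, C c -> 0 <= dot c u) ->
  (forall c, C c -> dot c u = 0 -> 0 < dot c v0) ->
  exists v, forall c, C c -> 0 < dot c v.
Proof.
move=> cC Cu Cv0.
have [M M0 hM] := compact_lower_bound cC (continuous_dotl v0).
pose C1 := C `&` [set c | dot c v0 <= 0].
have cC1 : compact C1.
  exact/compact_closedI/closed_sublevel/continuous_dotl.
have [g g0 hg] : exists2 g, 0 < g & forall c, C1 c -> g <= dot c u.
  apply: compact_pos_lower_bound cC1 (continuous_dotl u) _ => c [Cc /= cv0].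
  rewrite lt_def Cu // andbT; apply/eqP => cu0.
  by have := Cv0 c Cc cu0; lra.
pose e := g / (M + 1).
have e0 : 0 < e by rewrite divr_gt0 // ltr_wpDl.
have eM : e * M < g.
  by rewrite /e mulrAC ltr_pdivrMr ?ltr_wpDl // ltr_pM2l //; lra.
exists (u + e *: v0) => c Cc; rewrite dotvDr dotvZr.
have [cv0|cv0] := ltP 0 (dot c v0).
  by have := Cu c Cc; have := mulr_gt0 e0 cv0; lra.
have := hg c (conj Cc cv0); have := ler_wpM2l (ltW e0) (hM c Cc); nra.
Qed.

Lemma s_convex_slice (C : set V) w :
  s_convex Phi C -> (C `&` [set c | dot c w = 0]) !=set0 ->
  s_convex Phi (C `&` [set c | dot c w = 0]).
Proof.
case=> _ CS Ccomb slice0; split => // [x [/CS //]|x y l [Cx xw] [Cy yw] l01].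
split; first exact: Ccomb.
rewrite /= /scomb /rho; case: ifP => _; first exact: dotv0l.
by rewrite dotvZl dotvDl !dotvZl xw yw !mulr0 addr0 mulr0.
Qed.

Lemma strict_separation {k} {s : seq V} : (n < size s + k)%N -> orthogonal_system s ->
  forall C : set V, s_convex Phi C -> compact C -> (forall c, C c -> perp s c) ->
  exists v, forall c, C c -> 0 < dot c v.
Proof.
elim: k s => [|k IH] s sk os C hC cC Cs.
  by move: sk; rewrite addn0 ltnNge orthogonal_system_size.
have [u [us uu Cu]] := weak_separation hPhi hC Cs.
have u0 : u != 0 by apply: contra_eq_neq uu => ->; rewrite dotv0l eq_sym oner_neq0.
pose C0 := C `&` [set c | dot c u = 0].
have [C00|C00] := pselect (C0 !=set0); last first.
  exists u => c Cc; rewrite lt_def Cu // andbT; apply/eqP => cu.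
  by apply: C00; exists c.
have [v0 C0v0] : exists v0, forall c, C0 c -> 0 < dot c v0.
  apply: (IH (u :: s)) => //; first by rewrite /= addSnnS.
  - exact: s_convex_slice.
  - exact/compact_closedI/closed_level/continuous_dotl.
  move=> c [Cc cu] w; rewrite inE => /orP[/eqP -> //|ws]; exact: Cs.
by apply: (tilt_separation cC Cu) => c Cc cu; apply: C0v0.
Qed.

Lemma compact_s_convex_separation {C : set V} :
  s_convex Phi C -> compact C ->
  exists2 u, dot u u = 1 & exists2 alpha, 0 < alpha & forall c, C c -> alpha <= dot c u.
Proof.
move=> hC cC.
have [v Cv] := strict_separation (k := n.+1) (s := [::]) (ltnSn n) I C hC cC
  (fun c _ => perp_nil c).
have [g g0 Cg] := compact_pos_lower_bound cC (continuous_dotl v) Cv.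
have [c0 Cc0] : C !=set0 by case: hC.
have v0 : v != 0 by apply: contraTneq (Cv c0 Cc0) => ->; rewrite dotv0r ltxx.
have [t t0 tv] := normalize v0.
exists (t *: v) => //; exists (t * g) => [|c Cc]; first by rewrite mulr_gt0.
by rewrite dotvZr ler_pM2l // Cg.
Qed.

End StrictSeparation.

Theorem mainTheorem4 (R : realType) (n : nat) (Phi : 'rV[R]_n -> R)
    (C : set 'rV[R]_n) :
  (2 <= n)%N -> gauge_like Phi -> s_convex Phi C ->
  (exists u0 : 'rV[R]_n, enorm u0 = 1 /\
     C `<=` [set x | 0 <= dotv x u0] `&` Ssph Phi) /\
  (closed_in_S Phi C ->
   exists (u0 : 'rV[R]_n) (alpha : R), [/\ enorm u0 = 1, 0 < alpha,
     C `<=` [set x | alpha <= dotv x u0] `&` Ssph Phi &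
     C `<=` [set x | Ssph Phi x /\ 0 < dotv x u0]]).
Proof.
move=> _ hPhi hC; have CS : C `<=` Ssph Phi by case: hC.
split=> [|closedC].
  have [u [_ uu Cu]] := weak_separation hPhi hC (s := [::]) (fun c _ => perp_nil c).
  by exists u; split; [exact: enorm_unit | move=> c Cc; split; [exact: Cu | exact: CS]].
have cC := closed_in_S_compact hPhi closedC.
have [u uu [alpha alpha0 Calpha]] := compact_s_convex_separation hPhi hC cC.
exists u, alpha; split=> [||c Cc|c Cc] //; first exact: enorm_unit.
  by split; [exact: Calpha | exact: CS].
by split; [exact: CS | exact: lt_le_trans alpha0 (Calpha c Cc)].
Qed.
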